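(* Let $G=([n],E)$ be a DAG all of whose edges $(u,v)$ satisfy $u<v$ that is a $\delta$-local expander, let $S\subseteq[n]$, and let $x<y$ in $[n]$ both be $\gamma$-good under $S$. If $\delta<\min\{\gamma/2,1/4\}$, then there is a directed path from $x$ to $y$ in $G-S$.
   Context: For $x\in[n]$ and integer $r>0$ let $I_r(x)=\{x-r+1,\ldots,x\}\cap[n]$ and $I^*_r(x)=\{x+1,\ldots,x+r\}\cap[n]$. A DAG $G=([n],E)$ is a $\delta$-local expander if for every $x\in[n]$, every integer $r\ge1$ with $r\le x$ and $r\le n-x$, and every $A\subseteq I_r(x)$, $B\subseteq I^*_r(x)$ with $|A|\ge\delta r$ and $|B|\ge\delta r$, there is an edge $(a,b)\in E$ with $a\in A$, $b\in B$. For $S\subseteq[n]$ and $\gamma>0$, a node $x\in[n]$ is $\gamma$-good under $S$ if for every integer $r>0$, $|I_r(x)\setminus S|\ge\gamma|I_r(x)|$ and $|I^*_r(x)\setminus S|\ge\gamma|I^*_r(x)|$. $G-S$ is $G$ with the nodes of $S$ and incident edges removed. *)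

From HB Require Import structures.
From mathcomp Require Import all_boot all_order all_algebra.
Set Implicit Arguments. Unset Strict Implicit. Unset Printing Implicit Defensive.
Import Order.TTheory GRing.Theory Num.Theory.

Definition inN (n v : nat) : bool := (1 <= v <= n).

(* I_r(x) = {x-r+1,...,x} ∩ [n]  (x-r+1 <= v  <=>  x < v + r) *)
Definition Iback (n r x : nat) : pred nat :=
  fun v => [&& x < v + r, v <= x & inN n v].

Definition Ifwd (n r x : nat) : pred nat :=
  fun v => [&& x < v, v <= x + r & inN n v].

Definition cardN (n : nat) (P : pred nat) : nat := count P (iota 1 n).

Definition subpred (A B : pred nat) : Prop := forall v, A v -> B v.

Definition local_expander (R : realFieldType) (n : nat) (E : rel nat) (delta : R) : Prop :=
  forall (x r : nat), inN n x -> 1 <= r -> r <= x -> r <= n - x ->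
  forall (A B : pred nat), subpred A (Iback n r x) -> subpred B (Ifwd n r x) ->
    (delta * r%:R <= (cardN n A)%:R)%R -> (delta * r%:R <= (cardN n B)%:R)%R ->
    exists a b, [/\ A a, B b & E a b].

Definition good (R : realFieldType) (n : nat) (S : pred nat) (gamma : R) (x : nat) : Prop :=
  forall r : nat, 0 < r ->
    (gamma * (cardN n (Iback n r x))%:R <= (cardN n (predD (Iback n r x) S))%:R)%R /\
    (gamma * (cardN n (Ifwd n r x))%:R <= (cardN n (predD (Ifwd n r x) S))%:R)%R.

Definition path_avoiding (n : nat) (E : rel nat) (S : pred nat) (x y : nat) : Prop :=
  exists p : seq nat, [/\ path E x p, last x p = y &
     all (fun v => inN n v && ~~ S v) (x :: p)].

From HB Require Import structures.
From mathcomp Require Import all_boot all_order all_algebra.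
From mathcomp Require Import zify lra boolp.
Set Implicit Arguments. Unset Strict Implicit. Unset Printing Implicit Defensive.
Import Order.TTheory GRing.Theory Num.Theory.
Local Open Scope ring_scope.

(* Let [reached] be the set of nodes reachable from x in G - S, and [coreached] the
   set of nodes from which y is reachable in G - S. Walk right from x. By goodness of
   x, the first j nodes contain at least gamma j free nodes (nodes outside S), and by
   strong induction at most delta (j - 1) of them are free but not reached: the first
   ceil(j/2) nodes then contain at least delta ceil(j/2) reached nodes, so the next
   block of that length cannot contain delta ceil(j/2) free unreached nodes, or the
   local expander would give an edge into one of them from a reached node. Walking
   left from y gives the same for [coreached]. Finally cut [x, y] around its middle
   into two adjacent blocks of length r: the left one holds delta r reached nodes,
   the right one delta r coreached nodes, and the expander joins them by an edge. *)

Lemma count_le_predD (T : Type) (a b : pred T) (s : seq T) :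
  (count a s <= count b s + count (predD a b) s)%N.
Proof. by elim: s => //= v s IH; case: (a v) (b v) => -[] /=; lia. Qed.

Lemma count_take_mono (T : Type) (a : pred T) (s : seq T) i j :
  (i <= j)%N -> (count a (take i s) <= count a (take j s))%N.
Proof. by move=> ij; rewrite -(subnKC ij) takeD count_cat leq_addr. Qed.

Section PrefixBound.
Variables (R : realFieldType) (delta gamma : R).
Hypotheses (delta_ge0 : 0 <= delta) (delta_le_half_gamma : 2 * delta <= gamma)
  (delta_le_half : 2 * delta <= 1).

Lemma count_reached_ge (T : Type) (free reached : pred T) (t : seq T) (r : nat) :
  gamma * r%:R <= (count free t)%:R ->
  (count (predD free reached) t)%:R <= delta * r%:R ->
  delta * r%:R <= (count reached t)%:R.
Proof.
move=> hfree hunr.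
have hsplit : (count free t)%:R
    <= (count reached t)%:R + (count (predD free reached) t)%:R :> R.
  by rewrite -natrD ler_nat count_le_predD.
have : 2 * delta * r%:R <= gamma * r%:R by rewrite ler_wpM2r.
lra.
Qed.

Lemma halves_count_bound (p q b : nat) :
  p%:R <= delta * b%:R -> q%:R < delta * b.+1%:R -> (p + q)%:R <= 2 * delta * b%:R.
Proof.
(* Integrality of the counts absorbs the extra delta; this is where 2 delta <= 1 is
   needed. lra ignores section hypotheses, hence the explicit [have := ...]. *)
rewrite -natr1 mulrDr mulr1 natrD => hp hq; have := delta_le_half.
have [qp|pq] := leqP q p.
  have : q%:R <= p%:R :> R by rewrite ler_nat.
  lra.
have : p%:R + 1 <= q%:R :> R by rewrite natr1 ler_nat.
lra.
Qed.

Variables (T : Type) (free reached : pred T) (s : seq T).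
Hypotheses (reached_head : all reached (take 1 s))
  (free_dense : forall j, (j < size s)%N -> gamma * j%:R <= (count free (take j s))%:R)
  (block_expands : forall m, (0 < m)%N -> (m + m <= size s)%N ->
     delta * m%:R <= (count reached (take m s))%:R ->
     (count (predD free reached) (take m (drop m s)))%:R < delta * m%:R).

Lemma count_unreached_take j : (j < size s)%N ->
  (count (predD free reached) (take j s))%:R <= delta * j.-1%:R.
Proof.
elim/ltn_ind: j => -[|[|j]] IH js; rewrite ?mulr0.
- by rewrite take0.
- suff -> : count (predD free reached) (take 1 s) = 0%N by [].
  by elim: (take 1 s) reached_head => //= v t IHt /andP[-> /IHt ->].
set b := uphalf j.
have [bj bs jb bbj] :
    [/\ (b.+1 < j.+2)%N, (b.+1 < size s)%N, (j <= b + b)%N & (b + b <= j.+1)%N].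
  by rewrite /b uphalfE; split; lia.
have hb := IH b.+1 bj bs.
have hreach : delta * b.+1%:R <= (count reached (take b.+1 s))%:R.
  apply: count_reached_ge (free_dense bs) (le_trans hb _).
  by rewrite ler_wpM2l // ler_nat.
have bbs : (b.+1 + b.+1 <= size s)%N by lia.
have hq := block_expands (ltn0Sn b) bbs hreach.
rewrite -{1}(subnKC (ltnW bj)) takeD count_cat.
apply: le_trans (_ : _ <= (count (predD free reached) (take b.+1 s)
  + count (predD free reached) (take b.+1 (drop b.+1 s)))%:R) _.
  by rewrite ler_nat leq_add2l count_take_mono //; lia.
apply: le_trans (halves_count_bound hb hq) _.
by rewrite [2 * _]mulrC -mulrA ler_wpM2l // -natrM ler_nat; lia.
Qed.

End PrefixBound.

Lemma take_drop_iota k m x L : (k + m <= L)%N ->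
  take m (drop k (iota x L)) = iota (x + k) m.
Proof. by move=> kmL; rewrite drop_iota take_iota; congr iota; lia. Qed.

Lemma take_drop_rev_iota k m x L : (k + m <= L)%N ->
  take m (drop k (rev (iota x L))) = rev (iota (x + L - k - m) m).
Proof.
move=> kmL; rewrite drop_rev take_rev size_takel ?size_iota ?leq_subr //.
by rewrite take_iota drop_iota; congr (rev (iota _ _)); lia.
Qed.

Lemma take_rev_iota m x L : (m <= L)%N ->
  take m (rev (iota x L)) = rev (iota (x + L - m) m).
Proof. by move=> mL; rewrite -(drop0 (rev _)) take_drop_rev_iota ?subn0. Qed.

Lemma cardN_iota n lo m (Q : pred nat) : (0 < lo)%N -> (lo + m <= n.+1)%N ->
  (forall v, Q v -> lo <= v < lo + m)%N -> cardN n Q = count Q (iota lo m).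
Proof.
move=> lo_gt0 lomn hQ.
have count0 k l : (k + l <= lo \/ lo + m <= k)%N -> count Q (iota k l) = 0%N.
  move=> hkl; apply/eqP; rewrite -leqn0 leqNgt -has_count; apply/hasPn => v.
  by rewrite mem_iota => hv; apply/negP => /hQ; lia.
rewrite /cardN (_ : n = lo.-1 + (m + (n.+1 - (lo + m))))%N; last lia.
by rewrite !iotaD !count_cat add1n prednK // (count0 1%N) ?(count0 (lo + m)) ?addn0; lia.
Qed.

Lemma cardN_Iback n r z (P Q : pred nat) : (r <= z <= n)%N ->
  Q =1 predI (Iback n r z) P -> cardN n Q = count P (iota (z.+1 - r) r).
Proof.
move=> hz hQ; rewrite (@cardN_iota _ (z.+1 - r) r);
  [| lia | lia | by move=> v; rewrite hQ /= /Iback /inN; lia].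
apply: eq_in_count => v; rewrite mem_iota hQ /= /Iback /inN => hv.
by rewrite (_ : [&& _, _ & _] = true) //; lia.
Qed.

Lemma cardN_Ifwd n r z (P Q : pred nat) : (z + r <= n)%N ->
  Q =1 predI (Ifwd n r z) P -> cardN n Q = count P (iota z.+1 r).
Proof.
move=> hz hQ; rewrite (@cardN_iota _ z.+1 r);
  [| lia | lia | by move=> v; rewrite hQ /= /Ifwd /inN; lia].
apply: eq_in_count => v; rewrite mem_iota hQ /= /Ifwd /inN => hv.
by rewrite (_ : [&& _, _ & _] = true) //; lia.
Qed.

Section Goodness.
Variables (R : realFieldType) (n : nat) (S : pred nat) (gamma : R) (x : nat).

Lemma good_fwd_count j : good n S gamma x -> (x + j <= n)%N ->
  gamma * j%:R <= (count (predC S) (iota x.+1 j))%:R.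
Proof.
case: j => [|j] good_x hj; first by rewrite mulr0.
have [_] := good_x j.+1 isT.
rewrite (cardN_Ifwd (r := j.+1) (z := x) (P := predT)) ?count_predT ?size_iota //
  => [|v]; last by rewrite /= andbT.
by rewrite (cardN_Ifwd (r := j.+1) (z := x) (P := predC S)) // => v; rewrite /= andbC.
Qed.

Lemma good_bwd_count j : good n S gamma x -> (j <= x <= n)%N ->
  gamma * j%:R <= (count (predC S) (iota (x.+1 - j) j))%:R.
Proof.
case: j => [|j] good_x hj; first by rewrite mulr0.
have [+ _] := good_x j.+1 isT.
rewrite (cardN_Iback (r := j.+1) (z := x) (P := predT)) ?count_predT ?size_iota //
  => [|v]; last by rewrite /= andbT.
by rewrite (cardN_Iback (r := j.+1) (z := x) (P := predC S)) // => v; rewrite /= andbC.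
Qed.

Lemma good_free : 0 < gamma -> inN n x -> good n S gamma x -> ~~ S x /\ gamma <= 1.
Proof.
move=> gamma_gt0 /andP[x_gt0 xn] good_x; have := @good_bwd_count 1 good_x.
rewrite x_gt0 xn subn1 /= addn0 => /(_ isT).
by case: (S x) => /= h; split => //; lra.
Qed.

End Goodness.

Section Paths.
Variables (n : nat) (E : rel nat) (S : pred nat).

Lemma path_avoiding_refl x : inN n x -> ~~ S x -> path_avoiding n E S x x.
Proof. by move=> xn xS; exists [::]; rewrite /= xn xS. Qed.

Lemma path_avoiding_src x y : path_avoiding n E S x y -> inN n x && ~~ S x.
Proof. by case=> p [_ _ /andP[]]. Qed.

Lemma path_avoiding_dst x y : path_avoiding n E S x y -> inN n y && ~~ S y.
Proof. by case=> p [_ <- /allP]; apply; exact: mem_last. Qed.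

Lemma path_avoiding_edge u v : E u v -> inN n u && ~~ S u -> inN n v && ~~ S v ->
  path_avoiding n E S u v.
Proof. by move=> Euv hu hv; exists [:: v]; rewrite /= Euv hu hv. Qed.

Lemma path_avoiding_trans x v y : path_avoiding n E S x v -> path_avoiding n E S v y ->
  path_avoiding n E S x y.
Proof.
case=> p [px <- pS] [q [qv <- /andP[_ qS]]]; exists (p ++ q).
by rewrite cat_path px qv last_cat -cat_cons all_cat pS.
Qed.

End Paths.

Section LocalExpander.
Variables (R : realFieldType) (n : nat) (E : rel nat) (delta : R).
Hypothesis expander : local_expander n E delta.

Lemma local_expander_gt0 : (1 < n)%N -> 0 < delta.
Proof.
move=> n_gt1; rewrite ltNge; apply/negP => delta_le0.
have card0 : delta * 1%:R <= (cardN n pred0)%:R by rewrite /cardN count_pred0 mulr1.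
have n1_gt0 : (0 < n - 1)%N by rewrite subn_gt0.
have sub0 (P : pred nat) v : pred0 v -> P v by [].
by have [a [b []]] := expander (x := 1) (r := 1) (ltnW n_gt1) isT isT n1_gt0
  (sub0 _) (sub0 _) card0 card0.
Qed.

Lemma local_expander_edge lo r (A B : pred nat) :
  (0 < lo)%N -> (0 < r)%N -> (lo + r + r <= n.+1)%N ->
  delta * r%:R <= (count A (iota lo r))%:R ->
  delta * r%:R <= (count B (iota (lo + r) r))%:R ->
  exists a b, [/\ A a, B b & E a b].
Proof.
move=> lo_gt0 r_gt0 lorn hA hB.
have [z [zlo z_in rz rzn]] :
    exists z, [/\ z.+1 = lo + r, inN n z, r <= z & r <= n - z]%N.
  by exists (lo + r).-1; rewrite /inN; split; lia.
have cardA : delta * r%:R <= (cardN n (predI (Iback n r z) A))%:R.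
  rewrite (cardN_Iback (r := r) (z := z) (P := A)) //; last by rewrite -ltnS zlo; lia.
  by rewrite zlo addnK.
have cardB : delta * r%:R <= (cardN n (predI (Ifwd n r z) B))%:R.
  by rewrite (cardN_Ifwd (r := r) (z := z) (P := B)) ?zlo //; lia.
have subI (P Q : pred nat) v : predI P Q v -> P v by case/andP.
have [a [b [/andP[_ Aa] /andP[_ Bb] Eab]]] :=
  expander z_in r_gt0 rz rzn (subI _ _) (subI _ _) cardA cardB.
by exists a, b.
Qed.

End LocalExpander.

Section Ray.
Variables (R : realFieldType) (n : nat) (E : rel nat) (S : pred nat).
Variables (delta gamma : R) (x y : nat).
Hypotheses (edge_in : forall u v, E u v -> inN n u && inN n v)
  (expander : local_expander n E delta) (delta_ge0 : 0 <= delta)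
  (delta_le_half_gamma : 2 * delta <= gamma) (delta_le_half : 2 * delta <= 1)
  (x_gt0 : (0 < x)%N) (xy : (x < y)%N) (yn : (y <= n)%N)
  (good_x : good n S gamma x) (good_y : good n S gamma y)
  (x_free : ~~ S x) (y_free : ~~ S y) (gamma_le1 : gamma <= 1).

Let L := (y.+1 - x)%N.
Let reached : pred nat := fun v => `[< path_avoiding n E S x v >].
Let coreached : pred nat := fun v => `[< path_avoiding n E S v y >].

Lemma free_count_x j : (j < L)%N -> gamma * j%:R <= (count (predC S) (iota x j))%:R.
Proof.
case: j => [|j] jL; first by rewrite mulr0.
have xjn : (x + j <= n)%N by rewrite /L in jL; lia.
have := good_fwd_count good_x xjn.
rewrite /= x_free add1n -!natr1 mulrDr mulr1; have := gamma_le1; lra.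
Qed.

Lemma reached_block_expands m : (0 < m)%N -> (m + m <= size (iota x L))%N ->
  delta * m%:R <= (count reached (take m (iota x L)))%:R ->
  (count (predD (predC S) reached) (take m (drop m (iota x L))))%:R < delta * m%:R.
Proof.
rewrite size_iota => m_gt0 mmL.
rewrite take_drop_iota // take_iota (minn_idPl (_ : m <= L)%N); last lia.
move=> hA; rewrite ltNge; apply/negP => hB.
have xmmn : (x + m + m <= n.+1)%N by rewrite /L in mmL; lia.
have [a [b [/asboolP xa /andP[/asboolP xb bS] Eab]]] :=
  local_expander_edge expander x_gt0 m_gt0 xmmn hA hB.
apply: xb; apply: path_avoiding_trans xa (path_avoiding_edge Eab (path_avoiding_dst xa) _).
by have /andP[_ ->] := edge_in Eab.
Qed.

Lemma unreached_count_x j : (j < L)%N ->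
  (count (predD (predC S) reached) (iota x j))%:R <= delta * j.-1%:R.
Proof.
have reached_x : all reached (take 1 (iota x L)).
  rewrite take_iota (minn_idPl _) /= ?andbT; last by rewrite /L; lia.
  by apply/asboolP; apply: path_avoiding_refl x_free; rewrite /inN; lia.
have free_dense k : (k < size (iota x L))%N ->
    gamma * k%:R <= (count (predC S) (take k (iota x L)))%:R.
  by rewrite size_iota take_iota => kL; rewrite (minn_idPl (ltnW kL)) free_count_x.
move=> jL; have jL' : (j < size (iota x L))%N by rewrite size_iota.
have := count_unreached_take delta_ge0 delta_le_half_gamma delta_le_half
  reached_x free_dense reached_block_expands jL'.
by rewrite take_iota (minn_idPl (ltnW jL)).
Qed.

Lemma reached_dense e r : (e <= 1)%N -> (e + r < L)%N ->
  delta * r%:R <= (count reached (iota (x + e) r))%:R.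
Proof.
have U := count_reached_ge delta_le_half_gamma.
case: e => [|[|//]] _ erL; rewrite ?addn0 ?addn1.
  apply: U (free_count_x erL) (le_trans (unreached_count_x erL) _).
  by rewrite ler_wpM2l // ler_nat leq_pred.
have xrn : (x + r <= n)%N by rewrite /L in erL; lia.
apply: U (good_fwd_count good_x xrn) (le_trans _ (unreached_count_x erL)).
by rewrite /= ler_nat leq_addl.
Qed.

Lemma coreached_block_expands m : (0 < m)%N -> (m + m <= size (rev (iota x L)))%N ->
  delta * m%:R <= (count coreached (take m (rev (iota x L))))%:R ->
  (count (predD (predC S) coreached) (take m (drop m (rev (iota x L)))))%:R < delta * m%:R.
Proof.
rewrite size_rev size_iota => m_gt0 mmL.
rewrite take_rev_iota ?take_drop_rev_iota ?count_rev; [|lia|lia].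
have -> : (x + L - m = y.+1 - m)%N by rewrite /L; lia.
move=> hB; rewrite ltNge; apply/negP => hA.
have lo_gt0 : (0 < y.+1 - m - m)%N by rewrite /L in mmL; lia.
have lomm : (y.+1 - m - m + m + m <= n.+1)%N by rewrite /L in mmL; lia.
rewrite (_ : y.+1 - m = y.+1 - m - m + m)%N in hB; last by rewrite /L in mmL; lia.
have [a [b [/andP[/asboolP ay aS] /asboolP yb Eab]]] :=
  local_expander_edge expander lo_gt0 m_gt0 lomm hA hB.
apply: ay; apply: path_avoiding_trans (path_avoiding_edge Eab _ (path_avoiding_src yb)) yb.
by have /andP[-> _] := edge_in Eab.
Qed.

Lemma unreached_count_y j : (j < L)%N ->
  (count (predD (predC S) coreached) (iota (y.+1 - j) j))%:R <= delta * j.-1%:R.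
Proof.
have xL k : (k <= L)%N -> (x + L - k = y.+1 - k)%N by rewrite /L; lia.
have coreached_y : all coreached (take 1 (rev (iota x L))).
  rewrite take_rev_iota ?xL ?subn1 /= ?andbT; try by rewrite /L; lia.
  by apply/asboolP; apply: path_avoiding_refl y_free; rewrite /inN; lia.
have free_dense k : (k < size (rev (iota x L)))%N ->
    gamma * k%:R <= (count (predC S) (take k (rev (iota x L))))%:R.
  rewrite size_rev size_iota => kL; rewrite take_rev_iota ?count_rev ?xL ?(ltnW kL) //.
  by apply: good_bwd_count good_y _; rewrite /L in kL; lia.
move=> jL; have jL' : (j < size (rev (iota x L)))%N by rewrite size_rev size_iota.
have := count_unreached_take delta_ge0 delta_le_half_gamma delta_le_half
  coreached_y free_dense coreached_block_expands jL'.
by rewrite take_rev_iota ?count_rev ?xL ?(ltnW jL).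
Qed.

Lemma coreached_dense r : (r < L)%N ->
  delta * r%:R <= (count coreached (iota (y.+1 - r) r))%:R.
Proof.
move=> rL; have ryn : (r <= y <= n)%N by rewrite /L in rL; lia.
apply: (count_reached_ge delta_le_half_gamma (good_bwd_count good_y ryn)).
by apply: le_trans (unreached_count_y rL) _; rewrite ler_wpM2l // ler_nat leq_pred.
Qed.

Lemma path_avoiding_of_good : path_avoiding n E S x y.
Proof.
have [e [r [e_le1 r_gt0 erL]]] : exists e r, [/\ e <= 1, 0 < r & e + r + r = L]%N.
  by exists (L %% 2)%N, (L %/ 2)%N; rewrite /L; split; lia.
have [lo_gt0 lorrn erL' rL] :
    [/\ 0 < x + e, x + e + r + r <= n.+1, e + r < L & r < L]%N.
  by rewrite /L in erL *; split; lia.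
have hB : delta * r%:R <= (count coreached (iota (x + e + r) r))%:R.
  by rewrite (_ : x + e + r = y.+1 - r)%N ?coreached_dense //; rewrite /L in erL; lia.
have [a [b [/asboolP xa /asboolP yb Eab]]] :=
  local_expander_edge expander lo_gt0 r_gt0 lorrn (reached_dense e_le1 erL') hB.
have ab := path_avoiding_edge Eab (path_avoiding_dst xa) (path_avoiding_src yb).
exact: path_avoiding_trans xa (path_avoiding_trans ab yb).
Qed.

End Ray.

Theorem mainTheorem11 (R : realFieldType) (n : nat) (E : rel nat) (S : pred nat)
  (delta gamma : R) (x y : nat) :
  (forall u v, E u v -> [/\ inN n u, inN n v & (u < v)%N]) ->
  local_expander n E delta ->
  (forall v, S v -> inN n v) ->
  0 < gamma ->
  inN n x -> inN n y -> (x < y)%N ->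
  good n S gamma x -> good n S gamma y ->
  delta < Num.min (gamma / 2) (1 / 4) ->
  path_avoiding n E S x y.
Proof.
move=> E_fwd expander _ gamma_gt0 x_in y_in xy good_x good_y.
rewrite lt_min => /andP[delta_lt_half_gamma delta_lt_quarter].
have edge_in u v : E u v -> inN n u && inN n v by case/E_fwd => -> ->.
have [x_free gamma_le1] := good_free gamma_gt0 x_in good_x.
have [y_free _] := good_free gamma_gt0 y_in good_y.
have [x_gt0 yn] : (0 < x)%N /\ (y <= n)%N by move: x_in y_in; rewrite /inN; lia.
have delta_gt0 : 0 < delta by apply: local_expander_gt0 expander _; lia.
apply: path_avoiding_of_good edge_in expander (ltW delta_gt0) _ _ x_gt0 xy yn
  good_x good_y x_free y_free gamma_le1; lra.
Qed.
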